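(* Let $X$ be a connected, locally path connected space and $H\le\pi_1(X,x_0)$. Then $X$ is semilocally path $H$-connected if and only if $H$ is an open subgroup of $\pi_1^{qtop}(X,x_0)$.
   Context: $X$ is semilocally path $H$-connected if for every path $\alpha$ starting at $x_0$ there is an open neighborhood $U_\alpha$ of $\alpha(1)$ with $i_*\pi_1(U_\alpha,\alpha(1))\le[\alpha^{-1}H\alpha]$, where $[\alpha^{-1}H\alpha]=\{[\alpha^{-1}*\gamma*\alpha]:[\gamma]\in H\}\le\pi_1(X,\alpha(1))$ and $i$ is inclusion. $\pi_1^{qtop}(X,x_0)$ is $\pi_1(X,x_0)$ with the quotient topology induced from the compact-open topology on the space of loops at $x_0$. *)

From Stdlib Require Import Reals Rtopology List.
Open Scope R_scope.

Definition is_topology {X : Type} (op : (X -> Prop) -> Prop) : Prop :=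
  op (fun _ => True) /\
  (forall U V, op U -> op V -> op (fun x => U x /\ V x)) /\
  (forall F : (X -> Prop) -> Prop, (forall U, F U -> op U) ->
      op (fun x => exists U, F U /\ U x)).

Definition inI (t : R) : Prop := 0 <= t <= 1.

(** A path in X is a function R -> X continuous on [0,1] (values outside
    [0,1] are irrelevant); continuity uses the subspace topology of [0,1]. *)
Definition is_path {X : Type} (op : (X -> Prop) -> Prop) (p : R -> X) : Prop :=
  forall V, op V -> forall t, inI t -> V (p t) ->
    exists eps, eps > 0 /\ forall s, inI s -> Rabs (s - t) < eps -> V (p s).

Definition path_in {X : Type} (op : (X -> Prop) -> Prop) (U : X -> Prop)
  (p : R -> X) : Prop := is_path op p /\ forall t, inI t -> U (p t).

Definition is_loop {X : Type} (op : (X -> Prop) -> Prop) (x : X) (p : R -> X)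
  : Prop := is_path op p /\ p 0 = x /\ p 1 = x.

Definition pconcat {X : Type} (p q : R -> X) : R -> X :=
  fun t => if Rle_dec t (1/2) then p (2 * t) else q (2 * t - 1).
Definition prev {X : Type} (p : R -> X) : R -> X := fun t => p (1 - t).
Definition pconst {X : Type} (x : X) : R -> X := fun _ => x.

Definition path_homotopic {X : Type} (op : (X -> Prop) -> Prop)
  (p q : R -> X) : Prop :=
  exists F : R -> R -> X,
    (forall V, op V -> forall s t, inI s -> inI t -> V (F s t) ->
       exists eps, eps > 0 /\ forall s' t', inI s' -> inI t' ->
         Rabs (s' - s) < eps -> Rabs (t' - t) < eps -> V (F s' t')) /\
    (forall s, inI s -> F s 0 = p s /\ F s 1 = q s) /\
    (forall t, inI t -> F 0 t = p 0 /\ F 1 t = p 1).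

(** A subgroup H <= pi_1(X,x0), represented (as usual for subsets of a
    quotient) by the saturated set of loops whose classes lie in H. *)
Definition is_pi1_subgroup {X : Type} (op : (X -> Prop) -> Prop) (x0 : X)
  (H : (R -> X) -> Prop) : Prop :=
  (forall p, H p -> is_loop op x0 p) /\
  (forall p q, H p -> path_homotopic op p q -> H q) /\
  H (pconst x0) /\
  (forall p q, H p -> H q -> H (pconcat p q)) /\
  (forall p, H p -> H (prev p)).

Definition connected {X : Type} (op : (X -> Prop) -> Prop) : Prop :=
  forall U, op U -> op (fun x => ~ U x) ->
    (forall x, U x) \/ (forall x, ~ U x).

Definition path_connected_set {X : Type} (op : (X -> Prop) -> Prop)
  (V : X -> Prop) : Prop :=
  forall x y, V x -> V y ->
    exists p, path_in op V p /\ p 0 = x /\ p 1 = y.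

Definition locally_path_connected {X : Type} (op : (X -> Prop) -> Prop)
  : Prop :=
  forall U x, op U -> U x ->
    exists V, op V /\ V x /\ (forall y, V y -> U y) /\ path_connected_set op V.

(** * Semilocally path H-connected:
    for every path a from x0 there is an open U containing a(1) such that
    every loop b at a(1) in U is homotopic (in X) to a^{-1} * g * a
    for some [g] in H, i.e. i_* pi_1(U,a(1)) <= [a^{-1} H a]. *)
Definition semilocally_path_H_connected {X : Type}
  (op : (X -> Prop) -> Prop) (x0 : X) (H : (R -> X) -> Prop) : Prop :=
  forall a, is_path op a -> a 0 = x0 ->
    exists U, op U /\ U (a 1) /\
      forall b, path_in op U b -> b 0 = a 1 -> b 1 = a 1 ->
        exists g, H g /\ path_homotopic op b (pconcat (pconcat (prev a) g) a).

Definition subbasic {X : Type} (op : (X -> Prop) -> Prop)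
  (KV : (R -> Prop) * (X -> Prop)) : Prop :=
  compact (fst KV) /\ (forall t, fst KV t -> inI t) /\ op (snd KV).

Definition in_subbasic {X : Type} (KV : (R -> Prop) * (X -> Prop))
  (f : R -> X) : Prop := forall t, fst KV t -> snd KV (f t).

(** S (a set of loops at x0) is open in the compact-open topology on
    Omega(X,x0): every point has a basic neighbourhood (finite intersection
    of subbasic sets, intersected with the loop space) inside S. *)
Definition co_open_loops {X : Type} (op : (X -> Prop) -> Prop) (x0 : X)
  (S : (R -> X) -> Prop) : Prop :=
  forall f, S f ->
    exists l : list ((R -> Prop) * (X -> Prop)),
      (forall KV, In KV l -> subbasic op KV) /\
      (forall KV, In KV l -> in_subbasic KV f) /\
      (forall g, is_loop op x0 g ->
         (forall KV, In KV l -> in_subbasic KV g) -> S g).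

(** H is open in pi_1^{qtop}(X,x0): by definition of the quotient topology,
    its preimage in Omega(X,x0) (= the saturated set of loops H) is open. *)
Definition open_in_pi1_qtop {X : Type} (op : (X -> Prop) -> Prop) (x0 : X)
  (H : (R -> X) -> Prop) : Prop := co_open_loops op x0 H.

From Stdlib Require Import Reals Rtopology List Lra Classical.
Open Scope R_scope.

(* If H is open, then for a path a from x0 the loop a · a^-1, which lies in H, has a basic
   compact-open neighbourhood inside H.  Squeezing a small loop b at a(1) into the middle
   of a · a^-1 keeps it in that neighbourhood, so a · b · a^-1 lies in H.
   Conversely, for a loop f in H we push, by real induction along [0,1], a basic
   neighbourhood of f in which every loop g has g|[0,u] H-equivalent to f|[0,u] followed by
   a short correction path; semilocal H-connectedness at f(t) along f|[0,t] supplies the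
   local step, and at u = 1 it says that every such g lies in H f = H. *)

Definition maps_I (f : R -> R) : Prop := forall s, inI s -> inI (f s).

Definition lipschitz_I (f : R -> R) : Prop := exists L, 0 < L /\
  forall s s', inI s -> inI s' -> Rabs (f s' - f s) <= L * Rabs (s' - s).

Definition maps_square (g : R -> R -> R) : Prop :=
  forall s t, inI s -> inI t -> inI (g s t).

Definition lipschitz_square (g : R -> R -> R) : Prop := exists L, 0 < L /\
  forall s t s' t', inI s -> inI t -> inI s' -> inI t' ->
    Rabs (g s' t' - g s t) <= L * (Rabs (s' - s) + Rabs (t' - t)).

Lemma inI_0 : inI 0. Proof. unfold inI; lra. Qed.
Lemma inI_1 : inI 1. Proof. unfold inI; lra. Qed.
#[local] Hint Resolve inI_0 inI_1 : core.

Lemma lipschitz_I_ext f g :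
  lipschitz_I f -> (forall s, inI s -> f s = g s) -> lipschitz_I g.
Proof.
  intros [L [HL Hf]] E. exists L; split; auto.
  intros s s' Hs Hs'. rewrite <- !E by auto. auto.
Qed.

Lemma lipschitz_I_affine a b : lipschitz_I (fun s => a * s + b).
Proof.
  exists (Rabs a + 1). split; [pose proof (Rabs_pos a); lra|].
  intros s s' _ _. replace (a * s' + b - (a * s + b)) with (a * (s' - s)) by ring.
  rewrite Rabs_mult. apply Rmult_le_compat_r; [apply Rabs_pos | lra].
Qed.

Lemma lipschitz_I_affine_ext f a b :
  (forall s, f s = a * s + b) -> lipschitz_I f.
Proof. intros E. apply (lipschitz_I_ext (fun s => a * s + b)); auto using lipschitz_I_affine. Qed.

Lemma lipschitz_I_id : lipschitz_I (fun s => s).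
Proof. apply (lipschitz_I_affine_ext _ 1 0). intros; ring. Qed.

Lemma lipschitz_I_const c : lipschitz_I (fun _ => c).
Proof. apply (lipschitz_I_affine_ext _ 0 c). intros; ring. Qed.

(* Across the junction c, the increment splits at c into two pieces of the same sign. *)
Lemma lipschitz_I_paste f g c : lipschitz_I f -> lipschitz_I g -> f c = g c ->
  lipschitz_I (fun s => if Rle_dec s c then f s else g s).
Proof.
  intros [L1 [HL1 Hf]] [L2 [HL2 Hg]] E. exists (L1 + L2). split; [lra|].
  assert (Af : forall x y, inI x -> inI y -> Rabs (f y - f x) <= (L1 + L2) * Rabs (y - x)).
  { intros x y Hx Hy. eapply Rle_trans; [apply Hf; auto|].
    apply Rmult_le_compat_r; [apply Rabs_pos | lra]. }
  assert (Ag : forall x y, inI x -> inI y -> Rabs (g y - g x) <= (L1 + L2) * Rabs (y - x)).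
  { intros x y Hx Hy. eapply Rle_trans; [apply Hg; auto|].
    apply Rmult_le_compat_r; [apply Rabs_pos | lra]. }
  intros s s' Hs Hs'. unfold inI in *.
  destruct (Rle_dec s c), (Rle_dec s' c); auto.
  - assert (Hc : inI c) by (unfold inI; lra).
    replace (g s' - f s) with ((g s' - g c) + (f c - f s)) by (rewrite E; ring).
    eapply Rle_trans; [apply Rabs_triang|].
    pose proof (Ag c s' Hc Hs'). pose proof (Af s c Hs Hc).
    rewrite (Rabs_pos_eq (s' - s)) by lra.
    rewrite (Rabs_pos_eq (s' - c)) in * by lra. rewrite (Rabs_pos_eq (c - s)) in * by lra.
    nra.
  - assert (Hc : inI c) by (unfold inI; lra).
    replace (f s' - g s) with ((f s' - f c) + (g c - g s)) by (rewrite E; ring).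
    eapply Rle_trans; [apply Rabs_triang|].
    pose proof (Af c s' Hc Hs'). pose proof (Ag s c Hs Hc).
    rewrite (Rabs_left1 (s' - s)) by lra.
    rewrite (Rabs_left1 (s' - c)) in * by lra. rewrite (Rabs_left1 (c - s)) in * by lra.
    nra.
Qed.

Lemma lipschitz_square_l f : lipschitz_I f -> lipschitz_square (fun s _ => f s).
Proof.
  intros [L [HL Hf]]. exists L; split; auto. intros s t s' t' Hs _ Hs' _.
  eapply Rle_trans; [apply Hf; auto|].
  apply Rmult_le_compat_l; [lra|]. pose proof (Rabs_pos (t' - t)); lra.
Qed.

Lemma lipschitz_square_r f : lipschitz_I f -> lipschitz_square (fun _ t => f t).
Proof.
  intros [L [HL Hf]]. exists L; split; auto. intros s t s' t' _ Ht _ Ht'.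
  eapply Rle_trans; [apply Hf; auto|].
  apply Rmult_le_compat_l; [lra|]. pose proof (Rabs_pos (s' - s)); lra.
Qed.

Lemma lipschitz_square_snd : lipschitz_square (fun _ t => t).
Proof. apply (lipschitz_square_r (fun t => t)), lipschitz_I_id. Qed.

Lemma maps_square_snd : maps_square (fun _ t => t).
Proof. intros s t _ Ht; auto. Qed.

Lemma Rabs_scale_le x y : 0 <= x <= 1 -> Rabs (x * y) <= Rabs y.
Proof.
  intros Hx. rewrite Rabs_mult, Rabs_pos_eq by lra.
  pose proof (Rabs_pos y). nra.
Qed.

Lemma lipschitz_square_interpolate f g :
  lipschitz_I f -> lipschitz_I g -> maps_I f -> maps_I g ->
  lipschitz_square (fun s t => (1 - t) * f s + t * g s).
Proof.
  intros [L1 [HL1 Hf]] [L2 [HL2 Hg]] Mf Mg.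
  exists (L1 + L2 + 2). split; [lra|].
  intros s t s' t' Hs Ht Hs' Ht'.
  pose proof (Mf s Hs). pose proof (Mg s Hs).
  pose proof (Hf s s' Hs Hs'). pose proof (Hg s s' Hs Hs'). unfold inI in *.
  replace ((1 - t') * f s' + t' * g s' - ((1 - t) * f s + t * g s)) with
    (((1 - t') * (f s' - f s) + t' * (g s' - g s)) + (f s * (t - t') + g s * (t' - t)))
    by ring.
  eapply Rle_trans; [apply Rabs_triang|].
  eapply Rle_trans; [apply Rplus_le_compat; apply Rabs_triang|].
  pose proof (Rabs_scale_le (1 - t') (f s' - f s) ltac:(lra)).
  pose proof (Rabs_scale_le t' (g s' - g s) ltac:(lra)).
  pose proof (Rabs_scale_le (f s) (t - t') ltac:(lra)).
  pose proof (Rabs_scale_le (g s) (t' - t) ltac:(lra)).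
  rewrite (Rabs_minus_sym t t') in *.
  pose proof (Rabs_pos (s' - s)). pose proof (Rabs_pos (t' - t)).
  nra.
Qed.

(* The supremum of the set of parameters reached by P lies in a good window of itself,
   so it is 1 and P 1 holds. *)
Lemma real_induction (P : R -> Prop) : P 0 ->
  (forall t, inI t -> exists e, e > 0 /\ forall w v, inI w -> inI v ->
     t - e < w -> w <= v -> v < t + e -> P w -> P v) ->
  P 1.
Proof.
  intros P0 Step.
  pose (S u := inI u /\ P u).
  assert (Bd : bound S) by (exists 1; intros x [Hx _]; unfold inI in Hx; lra).
  destruct (completeness S Bd (ex_intro _ 0 (conj inI_0 P0))) as [m [Hub Hlub]].
  assert (m0 : 0 <= m) by (apply Hub; split; auto).
  assert (m1 : m <= 1) by (apply Hlub; intros x [Hx _]; unfold inI in Hx; lra).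
  destruct (Step m ltac:(unfold inI; lra)) as [e [He Hs]].
  destruct (classic (exists w, S w /\ m - e < w)) as [[w [[Iw Pw] Hw]] | Hn].
  - assert (Hwm : w <= m) by (apply Hub; split; auto).
    pose (v := Rmin 1 (m + e / 2)).
    assert (Hv1 : v <= 1) by apply Rmin_l. assert (Hv2 : v <= m + e / 2) by apply Rmin_r.
    assert (Hv3 : m <= v) by (unfold v, Rmin; destruct Rle_dec; lra).
    assert (Pv : P v) by (apply (Hs w v); auto; unfold inI in *; lra).
    assert (v <= m) by (apply Hub; split; auto; unfold inI; lra).
    replace 1 with v by (unfold v, Rmin in *; destruct Rle_dec; lra). auto.
  - exfalso. assert (m <= m - e); [|lra].
    apply Hlub. intros x Sx. destruct (Rle_dec x (m - e)); auto.
    exfalso. apply Hn. exists x. split; auto. lra.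
Qed.

(* Clamped s |-> 2s and s |-> 2s - 1: each half of a concatenation, read on all of [0,1]. *)
Definition first_half (s : R) : R := if Rle_dec s (1/2) then 2 * s else 1.
Definition second_half (s : R) : R := if Rle_dec s (1/2) then 0 else 2 * s - 1.

Lemma lipschitz_I_first_half : lipschitz_I first_half.
Proof.
  apply lipschitz_I_paste; [apply (lipschitz_I_affine_ext _ 2 0) | apply lipschitz_I_const | ];
  intros; lra.
Qed.

Lemma lipschitz_I_second_half : lipschitz_I second_half.
Proof.
  apply lipschitz_I_paste; [apply lipschitz_I_const | apply (lipschitz_I_affine_ext _ 2 (-1)) | ];
  intros; lra.
Qed.

Lemma maps_I_first_half : maps_I first_half.
Proof. intros s Hs; unfold first_half, inI in *; destruct Rle_dec; lra. Qed.

Lemma maps_I_second_half : maps_I second_half.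
Proof. intros s Hs; unfold second_half, inI in *; destruct Rle_dec; lra. Qed.

Definition subpath {X : Type} (p : R -> X) (a b : R) : R -> X :=
  fun s => p (a + (b - a) * s).

Lemma inI_convex a b s : inI a -> inI b -> inI s -> inI (a + (b - a) * s).
Proof. unfold inI; intros; nra. Qed.

Lemma pconcat_0 {X} (p q : R -> X) : pconcat p q 0 = p 0.
Proof. unfold pconcat. destruct Rle_dec; [|lra]. f_equal; ring. Qed.
Lemma pconcat_1 {X} (p q : R -> X) : pconcat p q 1 = q 1.
Proof. unfold pconcat. destruct Rle_dec; [lra|]. f_equal; ring. Qed.
Lemma prev_0 {X} (p : R -> X) : prev p 0 = p 1.
Proof. unfold prev. f_equal; ring. Qed.
Lemma prev_1 {X} (p : R -> X) : prev p 1 = p 0.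
Proof. unfold prev. f_equal; ring. Qed.
Lemma subpath_0 {X} (p : R -> X) a b : subpath p a b 0 = p a.
Proof. unfold subpath. f_equal; ring. Qed.
Lemma subpath_1 {X} (p : R -> X) a b : subpath p a b 1 = p b.
Proof. unfold subpath. f_equal; ring. Qed.

Ltac case_Rle :=
  repeat match goal with |- context [Rle_dec ?a ?b] => destruct (Rle_dec a b) end.

Ltac endpoints :=
  repeat first [ rewrite pconcat_0 | rewrite pconcat_1 | rewrite prev_0 | rewrite prev_1
               | rewrite subpath_0 | rewrite subpath_1 ];
  unfold pconst; auto; try congruence.

Ltac solve_pointwise :=
  unfold pconcat, prev, pconst; case_Rle;
  try (exfalso; lra); try reflexivity; try (f_equal; lra).

Section Paths.
Context {X : Type} (op : (X -> Prop) -> Prop).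

Local Infix "·" := pconcat (at level 40, left associativity).
Local Notation "p ≃ q" := (path_homotopic op p q) (at level 70).

Definition square_continuous (F : R -> R -> X) : Prop :=
  forall V, op V -> forall s t, inI s -> inI t -> V (F s t) ->
    exists eps, eps > 0 /\ forall s' t', inI s' -> inI t' ->
      Rabs (s' - s) < eps -> Rabs (t' - t) < eps -> V (F s' t').

Lemma square_continuous_ext F G : square_continuous F ->
  (forall s t, inI s -> inI t -> F s t = G s t) -> square_continuous G.
Proof.
  intros HF E V HV s t Hs Ht HG. rewrite <- E in HG by assumption.
  destruct (HF V HV s t Hs Ht HG) as [e [He Hc]]. exists e; split; auto.
  intros s' t' Hs' Ht' H1 H2. rewrite <- E by assumption. auto.
Qed.

Lemma square_continuous_swap F :
  square_continuous F -> square_continuous (fun s t => F t s).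
Proof.
  intros HF V HV s t Hs Ht HG.
  destruct (HF V HV t s Ht Hs HG) as [e [He Hc]]. exists e; split; auto.
Qed.

Lemma square_continuous_comp F g h : square_continuous F ->
  lipschitz_square g -> lipschitz_square h -> maps_square g -> maps_square h ->
  square_continuous (fun s t => F (g s t) (h s t)).
Proof.
  intros HF [L1 [HL1 Hg]] [L2 [HL2 Hh]] Mg Mh V HV s t Hs Ht HG.
  destruct (HF V HV _ _ (Mg s t Hs Ht) (Mh s t Hs Ht) HG) as [e [He Hc]].
  exists (Rmin (e / (2 * L1)) (e / (2 * L2))). split.
  { apply Rmin_pos; apply Rdiv_lt_0_compat; lra. }
  intros s' t' Hs' Ht' D1 D2.
  pose proof (Rmin_l (e / (2 * L1)) (e / (2 * L2))).
  pose proof (Rmin_r (e / (2 * L1)) (e / (2 * L2))).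
  apply Hc; auto.
  - eapply Rle_lt_trans; [apply Hg; auto|].
    replace e with (L1 * (e / (2 * L1) + e / (2 * L1))) by (field; lra).
    apply Rmult_lt_compat_l; lra.
  - eapply Rle_lt_trans; [apply Hh; auto|].
    replace e with (L2 * (e / (2 * L2) + e / (2 * L2))) by (field; lra).
    apply Rmult_lt_compat_l; lra.
Qed.

Lemma square_continuous_paste F G c :
  square_continuous F -> square_continuous G -> (forall t, inI t -> F c t = G c t) ->
  square_continuous (fun s t => if Rle_dec s c then F s t else G s t).
Proof.
  intros HF HG E V HV s t Hs Ht Hv.
  destruct (Rle_dec s c) as [l|l].
  - destruct (Req_dec s c) as [e0|e0].
    + subst s. assert (Hv2 : V (G c t)) by (rewrite <- E; auto).
      destruct (HF V HV c t Hs Ht Hv) as [e1 [He1 H1]].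
      destruct (HG V HV c t Hs Ht Hv2) as [e2 [He2 H2]].
      exists (Rmin e1 e2); split; [apply Rmin_pos; auto|].
      intros s' t' Hs' Ht' D1 D2. pose proof (Rmin_l e1 e2). pose proof (Rmin_r e1 e2).
      destruct (Rle_dec s' c); [apply H1 | apply H2]; auto; lra.
    + destruct (HF V HV s t Hs Ht Hv) as [e1 [He1 H1]].
      exists (Rmin e1 (c - s)); split; [apply Rmin_pos; lra|].
      intros s' t' Hs' Ht' D1 D2. pose proof (Rmin_l e1 (c - s)). pose proof (Rmin_r e1 (c - s)).
      pose proof (Rabs_def2 _ _ D1).
      destruct (Rle_dec s' c); [apply H1; auto | exfalso]; lra.
  - destruct (HG V HV s t Hs Ht Hv) as [e1 [He1 H1]].
    exists (Rmin e1 (s - c)); split; [apply Rmin_pos; lra|].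
    intros s' t' Hs' Ht' D1 D2. pose proof (Rmin_l e1 (s - c)). pose proof (Rmin_r e1 (s - c)).
    pose proof (Rabs_def2 _ _ D1).
    destruct (Rle_dec s' c); [exfalso | apply H1; auto]; lra.
Qed.

Lemma square_continuous_concat F G :
  square_continuous F -> square_continuous G -> (forall t, inI t -> F 1 t = G 0 t) ->
  square_continuous (fun s t => if Rle_dec s (1/2) then F (2 * s) t else G (2 * s - 1) t).
Proof.
  intros HF HG E.
  apply (square_continuous_ext
    (fun s t => if Rle_dec s (1/2) then F (first_half s) t else G (second_half s) t)).
  - apply square_continuous_paste.
    + apply (square_continuous_comp F (fun s _ => first_half s) (fun _ t => t)); auto.
      * apply lipschitz_square_l, lipschitz_I_first_half.
      * apply lipschitz_square_snd.
      * intros s t Hs _; apply maps_I_first_half; auto.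
      * apply maps_square_snd.
    + apply (square_continuous_comp G (fun s _ => second_half s) (fun _ t => t)); auto.
      * apply lipschitz_square_l, lipschitz_I_second_half.
      * apply lipschitz_square_snd.
      * intros s t Hs _; apply maps_I_second_half; auto.
      * apply maps_square_snd.
    + intros t Ht. unfold first_half, second_half. case_Rle; try lra.
      replace (2 * (1/2)) with 1 by lra. auto.
  - intros s t _ _. unfold first_half, second_half. destruct Rle_dec; auto.
Qed.

Lemma square_continuous_of_path p : is_path op p -> square_continuous (fun s _ => p s).
Proof.
  intros Hp V HV s t Hs Ht Hv. destruct (Hp V HV s Hs Hv) as [e [He Hc]].
  exists e; split; auto.
Qed.

Lemma is_path_of_square_continuous F t0 :
  square_continuous F -> inI t0 -> is_path op (fun s => F s t0).
Proof.
  intros HF Ht V HV s Hs Hv. destruct (HF V HV s t0 Hs Ht Hv) as [e [He Hc]].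
  exists e; split; auto. intros s' Hs' D. apply Hc; auto.
  rewrite Rminus_diag, Rabs_R0; lra.
Qed.

Lemma is_path_ext p q : is_path op p -> (forall s, inI s -> p s = q s) -> is_path op q.
Proof.
  intros Hp E. apply (is_path_of_square_continuous (fun s _ => q s) 0); auto.
  apply (square_continuous_ext (fun s _ => p s)); auto using square_continuous_of_path.
Qed.

Lemma is_path_comp p f : is_path op p -> lipschitz_I f -> maps_I f ->
  is_path op (fun s => p (f s)).
Proof.
  intros Hp Lf Mf. apply (is_path_of_square_continuous (fun s _ => p (f s)) 0); auto.
  apply (square_continuous_comp (fun u _ => p u) (fun s _ => f s) (fun _ t => t)).
  - apply square_continuous_of_path; auto.
  - apply lipschitz_square_l; auto.
  - apply lipschitz_square_snd.
  - intros s t Hs _; auto.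
  - apply maps_square_snd.
Qed.

Lemma is_path_const x : is_path op (pconst x).
Proof. intros V HV t Ht Hv. exists 1; split; [lra | intros; auto]. Qed.

Lemma is_path_concat p q : is_path op p -> is_path op q -> p 1 = q 0 ->
  is_path op (p · q).
Proof.
  intros Hp Hq E. apply (is_path_of_square_continuous (fun s _ => pconcat p q s) 0); auto.
  apply (square_continuous_concat (fun s _ => p s) (fun s _ => q s));
    auto using square_continuous_of_path.
Qed.

Lemma is_path_prev p : is_path op p -> is_path op (prev p).
Proof.
  intros Hp. apply (is_path_comp p (fun s => 1 - s)); auto.
  - apply (lipschitz_I_affine_ext _ (-1) 1). intros; ring.
  - intros s Hs; unfold inI in *; lra.
Qed.

Lemma is_path_subpath p a b : is_path op p -> inI a -> inI b -> is_path op (subpath p a b).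
Proof.
  intros Hp Ha Hb. apply (is_path_comp p (fun s => a + (b - a) * s)); auto.
  - apply (lipschitz_I_affine_ext _ (b - a) a). intros; ring.
  - intros s Hs; apply inI_convex; auto.
Qed.

Ltac paths :=
  repeat match goal with x := _ |- _ => progress unfold x end;
  repeat first [ apply is_path_concat | apply is_path_prev | apply is_path_const
               | apply is_path_subpath ];
  try assumption; try (unfold inI in *; lra); endpoints.

Lemma path_homotopic_endpoints p q : p ≃ q ->
  is_path op p /\ is_path op q /\ p 0 = q 0 /\ p 1 = q 1.
Proof.
  intros [F [HF [H1 H2]]]. split; [|split; [|split]].
  - apply (is_path_ext (fun s => F s 0)); [apply is_path_of_square_continuous|]; auto.
    intros; apply H1; auto.
  - apply (is_path_ext (fun s => F s 1)); [apply is_path_of_square_continuous|]; auto.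
    intros; apply H1; auto.
  - destruct (H1 0 inI_0), (H2 1 inI_1). congruence.
  - destruct (H1 1 inI_1), (H2 1 inI_1). congruence.
Qed.

Lemma path_homotopic_refl p : is_path op p -> p ≃ p.
Proof.
  intros Hp. exists (fun s _ => p s).
  split; [apply square_continuous_of_path; auto | split; intros; auto].
Qed.

Lemma path_homotopic_ext p p' q q' : p ≃ q ->
  (forall s, inI s -> p' s = p s) -> (forall s, inI s -> q' s = q s) -> p' ≃ q'.
Proof.
  intros [F [HF [H1 H2]]] Ep Eq. exists F. split; auto.
  split; intros s Hs.
  - rewrite Ep, Eq by auto. auto.
  - rewrite !Ep by auto. auto.
Qed.

Lemma path_homotopic_of_eq p q : is_path op p -> (forall s, inI s -> p s = q s) -> p ≃ q.
Proof.
  intros Hp E. apply (path_homotopic_ext p p p q); auto using path_homotopic_refl.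
  intros; symmetry; auto.
Qed.

Lemma path_homotopic_sym p q : p ≃ q -> q ≃ p.
Proof.
  intros Hh. destruct (path_homotopic_endpoints p q Hh) as [_ [_ [E0 E1]]].
  destruct Hh as [F [HF [H1 H2]]].
  exists (fun s t => F s (1 - t)). split; [|split; intros s Hs].
  - apply (square_continuous_comp F (fun s _ => s) (fun _ t => 1 - t)); auto.
    + apply lipschitz_square_l, lipschitz_I_id.
    + apply lipschitz_square_r, (lipschitz_I_affine_ext _ (-1) 1). intros; ring.
    + intros s t Hs _; auto.
    + intros s t _ Ht; unfold inI in *; lra.
  - rewrite Rminus_0_r. replace (1 - 1) with 0 by ring. destruct (H1 s Hs); auto.
  - assert (inI (1 - s)) by (unfold inI in *; lra). destruct (H2 _ H). split; congruence.
Qed.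

Lemma path_homotopic_trans p q r : p ≃ q -> q ≃ r -> p ≃ r.
Proof.
  intros Hpq Hqr. destruct (path_homotopic_endpoints p q Hpq) as [_ [_ [E0 E1]]].
  destruct Hpq as [F [HF [H1 H2]]], Hqr as [G [HG [G1 G2]]].
  exists (fun s t => if Rle_dec t (1/2) then F s (2 * t) else G s (2 * t - 1)).
  split; [|split; intros s Hs].
  - apply (square_continuous_swap
      (fun t s => if Rle_dec t (1/2) then F s (2 * t) else G s (2 * t - 1))).
    apply (square_continuous_concat (fun t s => F s t) (fun t s => G s t));
      try apply square_continuous_swap; auto.
    intros s Hs. destruct (H1 s Hs), (G1 s Hs). congruence.
  - case_Rle; try lra. rewrite Rmult_0_r. replace (2 * 1 - 1) with 1 by ring.
    destruct (H1 s Hs), (G1 s Hs); auto.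
  - unfold inI in Hs. destruct Rle_dec.
    + apply H2. unfold inI; lra.
    + assert (inI (2 * s - 1)) by (unfold inI; lra). destruct (G2 _ H). split; congruence.
Qed.

Ltac via m := apply (path_homotopic_trans _ m).

Lemma path_homotopic_concat p p' q q' : p ≃ p' -> q ≃ q' -> p 1 = q 0 -> p · q ≃ p' · q'.
Proof.
  intros Hp Hq E.
  destruct (path_homotopic_endpoints p p' Hp) as [_ [_ [E0 E1]]].
  destruct (path_homotopic_endpoints q q' Hq) as [_ [_ [F0 F1]]].
  destruct Hp as [F [HF [H1 H2]]], Hq as [G [HG [G1 G2]]].
  exists (fun s t => if Rle_dec s (1/2) then F (2 * s) t else G (2 * s - 1) t).
  split; [|unfold pconcat; split; intros s Hs].
  - apply square_continuous_concat; auto.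
    intros t Ht. destruct (H2 t Ht), (G2 t Ht). congruence.
  - unfold inI in Hs. destruct Rle_dec; [apply H1 | apply G1]; unfold inI; lra.
  - case_Rle; try lra. rewrite Rmult_0_r. replace (2 * 1 - 1) with 1 by ring.
    destruct (H2 s Hs), (G2 s Hs); auto.
Qed.

Lemma path_homotopic_concat_l p p' q : is_path op q -> p ≃ p' -> p 1 = q 0 -> p · q ≃ p' · q.
Proof. intros. apply path_homotopic_concat; auto using path_homotopic_refl. Qed.

Lemma path_homotopic_concat_r p q q' : is_path op p -> q ≃ q' -> p 1 = q 0 -> p · q ≃ p · q'.
Proof. intros. apply path_homotopic_concat; auto using path_homotopic_refl. Qed.

Lemma path_homotopic_prev p q : p ≃ q -> prev p ≃ prev q.
Proof.
  intros [F [HF [H1 H2]]]. exists (fun s t => F (1 - s) t).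
  split; [|unfold prev; split; intros s Hs].
  - apply (square_continuous_comp F (fun s _ => 1 - s) (fun _ t => t)); auto.
    + apply lipschitz_square_l, (lipschitz_I_affine_ext _ (-1) 1). intros; ring.
    + apply lipschitz_square_snd.
    + intros s t Hs _; unfold inI in *; lra.
    + apply maps_square_snd.
  - apply H1. unfold inI in *; lra.
  - rewrite Rminus_0_r. replace (1 - 1) with 0 by ring. destruct (H2 s Hs); auto.
Qed.

(* The straight-line homotopy between the two parametrizations. *)
Lemma path_homotopic_reparam p P Q f g :
  is_path op p -> lipschitz_I f -> lipschitz_I g -> maps_I f -> maps_I g ->
  f 0 = g 0 -> f 1 = g 1 ->
  (forall s, inI s -> P s = p (f s)) -> (forall s, inI s -> Q s = p (g s)) -> P ≃ Q.
Proof.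
  intros Hp Lf Lg Mf Mg E0 E1 EP EQ.
  apply (path_homotopic_ext (fun s => p (f s)) _ (fun s => p (g s))); auto.
  exists (fun s t => p ((1 - t) * f s + t * g s)). split.
  - apply (square_continuous_comp (fun u _ => p u) (fun s t => (1 - t) * f s + t * g s)
      (fun _ t => t)).
    + apply square_continuous_of_path; auto.
    + apply lipschitz_square_interpolate; auto.
    + apply lipschitz_square_snd.
    + intros s t Hs Ht. pose proof (Mf s Hs). pose proof (Mg s Hs). unfold inI in *. nra.
    + apply maps_square_snd.
  - split; intros s Hs; split; f_equal; try rewrite E0; try rewrite E1; ring.
Qed.

Lemma concat_assoc_homotopic p q r : is_path op p -> is_path op q -> is_path op r ->
  p 1 = q 0 -> q 1 = r 0 -> (p · q) · r ≃ p · (q · r).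
Proof.
  intros Hp Hq Hr E1 E2.
  pose (phi s := if Rle_dec s (1/4) then 2 * s
                 else if Rle_dec s (1/2) then s + 1/4 else (s + 1) / 2).
  apply (path_homotopic_reparam (p · (q · r)) _ _ phi (fun s => s)).
  - paths.
  - apply lipschitz_I_paste; [apply (lipschitz_I_affine_ext _ 2 0); intros; ring | |].
    + apply lipschitz_I_paste; [apply (lipschitz_I_affine_ext _ 1 (1/4)); intros; ring | |].
      * apply (lipschitz_I_affine_ext _ (1/2) (1/2)). intros; field.
      * field.
    + destruct Rle_dec; lra.
  - apply lipschitz_I_id.
  - intros s Hs; unfold phi, inI in *; case_Rle; lra.
  - intros s Hs; auto.
  - unfold phi; case_Rle; lra.
  - unfold phi; case_Rle; lra.
  - intros s Hs. unfold phi. solve_pointwise.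
  - intros s _; reflexivity.
Qed.

Lemma concat_prev_homotopic_const p : is_path op p -> p · prev p ≃ pconst (p 0).
Proof.
  intros Hp.
  apply (path_homotopic_reparam p _ _
    (fun s => if Rle_dec s (1/2) then 2 * s else 2 - 2 * s) (fun _ => 0)).
  - auto.
  - apply lipschitz_I_paste;
      [apply (lipschitz_I_affine_ext _ 2 0) | apply (lipschitz_I_affine_ext _ (-2) 2) |];
      intros; lra.
  - apply lipschitz_I_const.
  - intros s Hs; unfold inI in *; case_Rle; lra.
  - intros s Hs; unfold inI in *; lra.
  - case_Rle; lra.
  - case_Rle; lra.
  - intros s Hs; solve_pointwise.
  - intros s Hs; solve_pointwise.
Qed.

Lemma prev_concat_homotopic_const p : is_path op p -> prev p · p ≃ pconst (p 1).
Proof.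
  intros Hp.
  apply (path_homotopic_reparam p _ _
    (fun s => if Rle_dec s (1/2) then 1 - 2 * s else 2 * s - 1) (fun _ => 1)).
  - auto.
  - apply lipschitz_I_paste;
      [apply (lipschitz_I_affine_ext _ (-2) 1) | apply (lipschitz_I_affine_ext _ 2 (-1)) |];
      intros; lra.
  - apply lipschitz_I_const.
  - intros s Hs; unfold inI in *; case_Rle; lra.
  - intros s Hs; unfold inI in *; lra.
  - case_Rle; lra.
  - case_Rle; lra.
  - intros s Hs; solve_pointwise.
  - intros s Hs; solve_pointwise.
Qed.

Lemma const_concat_homotopic p : is_path op p -> pconst (p 0) · p ≃ p.
Proof.
  intros Hp. apply (path_homotopic_reparam p _ _ second_half (fun s => s)).
  - auto.
  - apply lipschitz_I_second_half.
  - apply lipschitz_I_id.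
  - apply maps_I_second_half.
  - intros s Hs; auto.
  - unfold second_half; case_Rle; lra.
  - unfold second_half; case_Rle; lra.
  - intros s Hs. unfold second_half. solve_pointwise.
  - intros s _; reflexivity.
Qed.

Lemma concat_const_homotopic p : is_path op p -> p · pconst (p 1) ≃ p.
Proof.
  intros Hp. apply (path_homotopic_reparam p _ _ first_half (fun s => s)).
  - auto.
  - apply lipschitz_I_first_half.
  - apply lipschitz_I_id.
  - apply maps_I_first_half.
  - intros s Hs; auto.
  - unfold first_half; case_Rle; lra.
  - unfold first_half; case_Rle; lra.
  - intros s Hs. unfold first_half. solve_pointwise.
  - intros s _; reflexivity.
Qed.

Lemma prev_concat_homotopic p q : is_path op p -> is_path op q -> p 1 = q 0 ->
  prev (p · q) ≃ prev q · prev p.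
Proof.
  intros Hp Hq E. apply path_homotopic_of_eq; [paths|].
  intros s Hs. solve_pointwise.
  replace (1 - (2 * s - 1)) with (2 * (1 - s)) by ring.
  replace (2 * (1 - s)) with 1 by lra. replace (1 - 2 * s) with 0 by lra. auto.
Qed.

Lemma prev_prev_homotopic p : is_path op p -> prev (prev p) ≃ p.
Proof. intros Hp. apply path_homotopic_of_eq; [paths | intros s Hs; solve_pointwise]. Qed.

Lemma concat_cancel_l a x : is_path op a -> is_path op x -> x 0 = a 0 ->
  a · (prev a · x) ≃ x.
Proof.
  intros Ha Hx E.
  via ((a · prev a) · x); [apply path_homotopic_sym, concat_assoc_homotopic; paths|].
  via (pconst (a 0) · x);
    [apply path_homotopic_concat_l; [| apply concat_prev_homotopic_const |]; paths|].
  rewrite <- E. apply const_concat_homotopic; auto.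
Qed.

Lemma prev_cancel_l a x : is_path op a -> is_path op x -> x 0 = a 1 ->
  prev a · (a · x) ≃ x.
Proof.
  intros Ha Hx E.
  via ((prev a · a) · x); [apply path_homotopic_sym, concat_assoc_homotopic; paths|].
  via (pconst (a 1) · x);
    [apply path_homotopic_concat_l; [| apply prev_concat_homotopic_const |]; paths|].
  rewrite <- E. apply const_concat_homotopic; auto.
Qed.

Lemma concat_cancel_r x a : is_path op x -> is_path op a -> x 1 = a 0 ->
  (x · a) · prev a ≃ x.
Proof.
  intros Hx Ha E.
  via (x · (a · prev a)); [apply concat_assoc_homotopic; paths|].
  via (x · pconst (a 0));
    [apply path_homotopic_concat_r; [| apply concat_prev_homotopic_const |]; paths|].
  rewrite <- E. apply concat_const_homotopic; auto.
Qed.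

Lemma prev_cancel_r x a : is_path op x -> is_path op a -> x 1 = a 1 ->
  (x · prev a) · a ≃ x.
Proof.
  intros Hx Ha E.
  via (x · (prev a · a)); [apply concat_assoc_homotopic; paths|].
  via (x · pconst (a 1));
    [apply path_homotopic_concat_r; [| apply prev_concat_homotopic_const |]; paths|].
  rewrite <- E. apply concat_const_homotopic; auto.
Qed.

Lemma path_in_concat V p q : path_in op V p -> path_in op V q -> p 1 = q 0 ->
  path_in op V (p · q).
Proof.
  intros [Hp Vp] [Hq Vq] E. split; [apply is_path_concat; auto|].
  intros t Ht. unfold pconcat, inI in *. destruct Rle_dec; [apply Vp | apply Vq]; unfold inI; lra.
Qed.

Lemma path_in_prev V p : path_in op V p -> path_in op V (prev p).
Proof.
  intros [Hp Vp]. split; [apply is_path_prev; auto|].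
  intros t Ht. unfold prev, inI in *. apply Vp. unfold inI; lra.
Qed.

Lemma path_in_mono (V W : X -> Prop) p : (forall x, V x -> W x) -> path_in op V p -> path_in op W p.
Proof. intros S [Hp Vp]. split; auto. Qed.

Lemma path_in_subpath V p a b : is_path op p -> inI a -> inI b ->
  (forall u, Rmin a b <= u <= Rmax a b -> V (p u)) -> path_in op V (subpath p a b).
Proof.
  intros Hp Ia Ib Hv. split; [apply is_path_subpath; auto|].
  intros s Hs. unfold subpath. apply Hv. unfold inI in Hs. unfold Rmin, Rmax; destruct Rle_dec; nra.
Qed.

Lemma subpath_concat_homotopic p a b c : is_path op p -> inI a -> inI b -> inI c ->
  subpath p a b · subpath p b c ≃ subpath p a c.
Proof.
  intros Hp Ia Ib Ic.
  apply (path_homotopic_reparam p _ _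
    (fun s => if Rle_dec s (1/2) then a + (b - a) * (2 * s) else b + (c - b) * (2 * s - 1))
    (fun s => a + (c - a) * s)).
  - auto.
  - apply lipschitz_I_paste.
    + apply (lipschitz_I_affine_ext _ (2 * (b - a)) a). intros; ring.
    + apply (lipschitz_I_affine_ext _ (2 * (c - b)) (b - (c - b))). intros; ring.
    + field.
  - apply (lipschitz_I_affine_ext _ (c - a) a). intros; ring.
  - intros s Hs. unfold inI in Hs. destruct Rle_dec; apply inI_convex; auto; unfold inI; lra.
  - intros s Hs. apply inI_convex; auto.
  - destruct Rle_dec; [ring | lra].
  - destruct Rle_dec; [lra | ring].
  - intros s Hs. unfold pconcat, subpath. destruct Rle_dec; reflexivity.
  - intros s Hs. reflexivity.
Qed.

Lemma subpath_0_1_homotopic p : is_path op p -> subpath p 0 1 ≃ p.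
Proof.
  intros Hp. apply path_homotopic_of_eq; [paths | intros s _; unfold subpath; f_equal; ring].
Qed.

Lemma subpath_const_homotopic p a : is_path op p -> inI a -> pconst (p a) ≃ subpath p a a.
Proof.
  intros Hp Ha. apply path_homotopic_of_eq; [paths|].
  intros s _; unfold subpath, pconst; f_equal; ring.
Qed.

Section Cosets.
Context (x0 : X) (H : (R -> X) -> Prop) (HS : is_pi1_subgroup op x0 H).

(* For paths p, q from x0 with a common endpoint: [p] lies in the right coset H [q]. *)
Definition Hequiv (p q : R -> X) : Prop := H (p · prev q).

Lemma H_homotopic p q : H p -> p ≃ q -> H q.
Proof. destruct HS as [_ [Hhom _]]. eauto. Qed.

Lemma H_const_homotopic p : pconst x0 ≃ p -> H p.
Proof. apply H_homotopic. apply HS. Qed.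

Lemma Hequiv_of_homotopic p q : p 0 = x0 -> p ≃ q -> Hequiv p q.
Proof.
  intros E Hpq. destruct (path_homotopic_endpoints p q Hpq) as [Hp [Hq [E0 E1]]].
  apply H_const_homotopic, path_homotopic_sym.
  via (p · prev p).
  - apply path_homotopic_concat_r; [| apply path_homotopic_prev, path_homotopic_sym |]; paths.
  - rewrite <- E. apply concat_prev_homotopic_const; auto.
Qed.

Lemma Hequiv_trans p q r : is_path op p -> is_path op q -> is_path op r ->
  p 1 = q 1 -> q 1 = r 1 -> Hequiv p q -> Hequiv q r -> Hequiv p r.
Proof.
  intros Hp Hq Hr E1 E2 Spq Sqr.
  apply (H_homotopic ((p · prev q) · (q · prev r))); [apply HS; auto|].
  via (p · (prev q · (q · prev r))); [apply concat_assoc_homotopic; paths|].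
  apply path_homotopic_concat_r; [| apply prev_cancel_l |]; paths.
Qed.

Lemma Hequiv_concat_r p q r : is_path op p -> is_path op q -> is_path op r ->
  p 1 = r 0 -> q 1 = r 0 -> Hequiv p q -> Hequiv (p · r) (q · r).
Proof.
  intros Hp Hq Hr E1 E2 Spq. apply (H_homotopic _ _ Spq), path_homotopic_sym.
  via ((p · r) · (prev r · prev q)).
  { apply path_homotopic_concat_r; [| apply prev_concat_homotopic |]; paths. }
  via (p · (r · (prev r · prev q))); [apply concat_assoc_homotopic; paths|].
  apply path_homotopic_concat_r; [| apply concat_cancel_l |]; paths.
Qed.

Lemma Hequiv_homotopic_l p p' q : is_path op q -> p 0 = x0 -> p 1 = q 1 ->
  p ≃ p' -> Hequiv p q -> Hequiv p' q.
Proof.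
  intros Hq E0 E1 Hpp' S. destruct (path_homotopic_endpoints p p' Hpp') as [Hp [Hp' [F0 F1]]].
  apply (Hequiv_trans p' p q); auto; try congruence.
  apply Hequiv_of_homotopic; [congruence | apply path_homotopic_sym; auto].
Qed.

Lemma Hequiv_homotopic_r p q q' : is_path op p -> q 0 = x0 -> p 1 = q 1 ->
  q ≃ q' -> Hequiv p q -> Hequiv p q'.
Proof.
  intros Hp E0 E1 Hqq' S. destruct (path_homotopic_endpoints q q' Hqq') as [Hq [Hq' [F0 F1]]].
  apply (Hequiv_trans p q q'); auto; try congruence.
  apply Hequiv_of_homotopic; auto.
Qed.

Lemma H_of_Hequiv f g : is_path op g -> f 1 = g 1 -> H f -> Hequiv f g -> H g.
Proof.
  intros Hg E Hf Sfg. destruct (proj1 HS f Hf) as [Pf _].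
  apply (H_homotopic (prev (f · prev g) · f)); [apply HS; auto; apply HS; auto|].
  via ((prev (prev g) · prev f) · f).
  - apply path_homotopic_concat_l; [| apply prev_concat_homotopic |]; paths.
  - via ((g · prev f) · f); [| apply prev_cancel_r; auto].
    apply path_homotopic_concat_l; [| apply path_homotopic_concat_l |]; paths.
    apply prev_prev_homotopic; auto.
Qed.

Lemma Hequiv_conj a b h : is_path op a -> a 0 = x0 -> H h ->
  b ≃ (prev a · h) · a -> Hequiv (a · b) a.
Proof.
  intros Ha Ea Hh Hb. destruct (proj1 HS h Hh) as [Ph [Eh0 Eh1]].
  destruct (path_homotopic_endpoints _ _ Hb) as [Pb [_ [Eb0 Eb1]]].
  revert Eb0 Eb1; endpoints; intros Eb0 Eb1.
  apply (H_homotopic h); auto. apply path_homotopic_sym.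
  via ((a · ((prev a · h) · a)) · prev a).
  { apply path_homotopic_concat_l; [| apply path_homotopic_concat_r |]; paths. }
  via (a · (prev a · h)).
  { via (((a · (prev a · h)) · a) · prev a); [| apply concat_cancel_r; paths].
    apply path_homotopic_concat_l; [| apply path_homotopic_sym, concat_assoc_homotopic |]; paths. }
  apply concat_cancel_l; paths.
Qed.

(* With fw = ft · ftw and L = (fwv · c') · (c · gwv)^-1, the loop ftw · L · ftw^-1 is a
   conjugate of an element of H, hence fw · L ~ fw; multiplying on the right by c · gwv
   turns fw · c ~ gw into (fw · fwv) · c' ~ gw · gwv. *)
Lemma Hequiv_transport ft ftw fwv c' c gwv gw h :
  is_path op ft -> is_path op ftw -> is_path op fwv -> is_path op c' ->
  is_path op c -> is_path op gwv -> is_path op gw ->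
  ft 0 = x0 -> ft 1 = ftw 0 -> ftw 1 = fwv 0 -> fwv 1 = c' 0 -> c' 1 = gwv 1 ->
  c 0 = ftw 1 -> c 1 = gwv 0 -> gw 0 = x0 -> gw 1 = gwv 0 -> H h ->
  (ftw · ((fwv · c') · prev (c · gwv))) · prev ftw ≃ (prev ft · h) · ft ->
  Hequiv ((ft · ftw) · c) gw ->
  Hequiv (((ft · ftw) · fwv) · c') (gw · gwv).
Proof.
  intros Pft Pftw Pfwv Pc' Pc Pgwv Pgw E1 E2 E3 E4 E5 E6 E7 E8 E9 Hh Hconj Sc.
  set (fw := ft · ftw). set (y := c · gwv). set (L := (fwv · c') · prev y).
  assert (SL : Hequiv (fw · L) fw).
  { apply (Hequiv_homotopic_l ((ft · ((ftw · L) · prev ftw)) · ftw)); [paths..| |].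
    - via (ft · (((ftw · L) · prev ftw) · ftw)); [apply concat_assoc_homotopic; paths|].
      via (ft · (ftw · L)); [| apply path_homotopic_sym, concat_assoc_homotopic; paths].
      apply path_homotopic_concat_r; [| apply prev_cancel_r |]; paths.
    - apply Hequiv_concat_r; [paths..|].
      apply (Hequiv_conj ft _ h); auto. }
  assert (SLy : Hequiv ((fw · L) · y) (fw · y)).
  { apply Hequiv_concat_r; paths. }
  apply (Hequiv_trans _ ((fw · c) · gwv)); [paths..| |].
  - apply (Hequiv_homotopic_r _ (fw · y)); [paths..| |].
    + apply path_homotopic_sym, concat_assoc_homotopic; paths.
    + apply (Hequiv_homotopic_l ((fw · L) · y)); [paths..| | exact SLy].
      via (fw · (L · y)); [apply concat_assoc_homotopic; paths|].
      via (fw · (fwv · c')); [| apply path_homotopic_sym, concat_assoc_homotopic; paths].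
      apply path_homotopic_concat_r; [| apply prev_cancel_r |]; paths.
  - apply Hequiv_concat_r; paths.
Qed.

End Cosets.

Section Openness.
Context (T : is_topology op) (x0 : X) (H : (R -> X) -> Prop) (HS : is_pi1_subgroup op x0 H).

Lemma op_full : op (fun _ => True).
Proof. apply T. Qed.

Lemma op_inter U V : op U -> op V -> op (fun x => U x /\ V x).
Proof. apply T. Qed.

(* Near the parameter 1/2, the subbasic set KV leaves room for any point of U and of
   the final stretch a([1-2d,1]); this is where a small loop b at a(1) gets inserted. *)
Definition absorbs_middle (a : R -> X) (d : R) (U : X -> Prop)
  (KV : (R -> Prop) * (X -> Prop)) : Prop :=
  forall t, fst KV t -> Rabs (t - 1/2) < d ->
    forall x, U x \/ (exists s, inI s /\ 1 - 2 * d <= s /\ x = a s) -> snd KV x.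

Lemma absorbs_middle_mono a d d' U U' KV : d' <= d -> (forall x, U' x -> U x) ->
  absorbs_middle a d U KV -> absorbs_middle a d' U' KV.
Proof.
  intros Hd HU G t Ht Htd x Hx. apply (G t Ht); [lra|].
  destruct Hx as [Hx | [s [Hs [Hs2 ->]]]]; [left; auto | right].
  exists s. split; [auto | split; [lra | reflexivity]].
Qed.

(* Either 1/2 is in K, and then V is a neighbourhood of a(1); or K, being closed,
   misses a neighbourhood of 1/2. *)
Lemma subbasic_absorbs_middle a KV : is_path op a -> subbasic op KV ->
  in_subbasic KV (a · prev a) ->
  exists d U, d > 0 /\ op U /\ U (a 1) /\ absorbs_middle a d U KV.
Proof.
  intros Ha [Kc [_ Vo]] Hv.
  destruct (classic (fst KV (1/2))) as [Hk | Hk].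
  - assert (V1 : snd KV (a 1)).
    { pose proof (Hv _ Hk) as W. unfold pconcat in W. destruct Rle_dec; [|lra].
      replace (2 * (1/2)) with 1 in W by field. auto. }
    destruct (Ha (snd KV) Vo 1 inI_1 V1) as [e [He Hc]].
    exists (e / 4), (snd KV). repeat split; auto; [lra|].
    intros t Ht Htd x [Hx | [s [Hs [Hs2 ->]]]]; auto.
    apply Hc; auto. unfold inI in Hs. rewrite Rabs_left1 by lra. lra.
  - destruct (compact_P2 _ Kc (1/2) Hk) as [del Hdel].
    exists del, (fun _ => True). repeat split; auto using op_full; [apply cond_pos|].
    intros t Ht Htd. exfalso. apply (Hdel t); auto.
Qed.

Lemma subbasic_list_absorbs_middle a (l : list ((R -> Prop) * (X -> Prop))) : is_path op a ->
  (forall KV, In KV l -> subbasic op KV) ->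
  (forall KV, In KV l -> in_subbasic KV (a · prev a)) ->
  exists d U, d > 0 /\ op U /\ U (a 1) /\ forall KV, In KV l -> absorbs_middle a d U KV.
Proof.
  intros Ha. induction l as [|KV l IH]; intros Hsb Hin.
  - exists 1, (fun _ => True). repeat split; auto using op_full; [lra | intros KV []].
  - destruct IH as [d1 [U1 [Hd1 [HU1 [Hy1 G1]]]]]; [intros; apply Hsb, in_cons; auto
                                                 | intros; apply Hin, in_cons; auto |].
    destruct (subbasic_absorbs_middle a KV Ha) as [d2 [U2 [Hd2 [HU2 [Hy2 G2]]]]];
      [apply Hsb, in_eq | apply Hin, in_eq |].
    exists (Rmin d1 d2), (fun x => U1 x /\ U2 x).
    repeat split; auto using op_inter; [apply Rmin_pos; auto|].
    intros KV' [<- | Hl].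
    + eapply absorbs_middle_mono; [apply Rmin_r | | apply G2]. tauto.
    + eapply absorbs_middle_mono; [apply Rmin_l | | apply G1; auto]. tauto.
Qed.

(* Reparametrizes a · (b · prev a) so that it agrees with a · prev a outside
   [1/2, 1/2 + d]: all of b and the start of prev a are squeezed into that window. *)
Definition stretch_middle (d s : R) : R :=
  if Rle_dec s (1/2) then s
  else if Rle_dec s (1/2 + d) then 1/2 + (1/4 + d/2) / d * (s - 1/2)
  else (1 + s) / 2.

Lemma stretch_middle_window d s : 0 < d -> 1/2 < s <= 1/2 + d ->
  1/2 < stretch_middle d s <= 3/4 + d/2.
Proof.
  intros Hd Hs. unfold stretch_middle. case_Rle; try lra.
  assert (Hk : (1/4 + d/2) / d * d = 1/4 + d/2) by (field; lra).
  assert (0 < (1/4 + d/2) / d) by (apply Rdiv_lt_0_compat; lra).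
  assert ((1/4 + d/2) / d * (s - 1/2) <= (1/4 + d/2) / d * d) by (apply Rmult_le_compat_l; lra).
  assert (0 < (1/4 + d/2) / d * (s - 1/2)) by (apply Rmult_lt_0_compat; lra).
  lra.
Qed.

Lemma lipschitz_I_stretch_middle d : 0 < d -> lipschitz_I (stretch_middle d).
Proof.
  intros Hd. apply lipschitz_I_paste; [apply lipschitz_I_id | apply lipschitz_I_paste |].
  - apply (lipschitz_I_affine_ext _ ((1/4 + d/2) / d) (1/2 - (1/4 + d/2) / d * (1/2))).
    intros; ring.
  - apply (lipschitz_I_affine_ext _ (1/2) (1/2)). intros; field.
  - field; lra.
  - destruct Rle_dec; [ring | lra].
Qed.

Lemma maps_I_stretch_middle d : 0 < d <= 1/4 -> maps_I (stretch_middle d).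
Proof.
  intros Hd s Hs. destruct (Rle_dec s (1/2)); [|destruct (Rle_dec s (1/2 + d))].
  - unfold stretch_middle; destruct Rle_dec; [auto | lra].
  - pose proof (stretch_middle_window d s ltac:(lra) ltac:(lra)). unfold inI; lra.
  - unfold stretch_middle, inI in *; case_Rle; lra.
Qed.

Lemma stretch_middle_cases (a b : R -> X) d s : 0 < d <= 1/4 -> inI s ->
  let y := (a · (b · prev a)) (stretch_middle d s) in
  y = (a · prev a) s \/
  (Rabs (s - 1/2) <= d /\
   ((exists u, inI u /\ y = b u) \/ (exists u, inI u /\ 1 - 2 * d <= u /\ y = a u))).
Proof.
  intros Hd Hs y. destruct (Rle_dec s (1/2)); [|destruct (Rle_dec s (1/2 + d))].
  - left. unfold y, stretch_middle. solve_pointwise.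
  - right. pose proof (stretch_middle_window d s ltac:(lra) ltac:(lra)).
    split; [rewrite Rabs_pos_eq; lra|].
    unfold y, pconcat, prev. case_Rle; try lra.
    + left. eexists; split; [|reflexivity]. unfold inI; lra.
    + right. eexists; split; [|split; [|reflexivity]]; unfold inI; lra.
  - left. unfold y, stretch_middle. solve_pointwise.
Qed.

Lemma in_subbasic_stretch_middle a b d d0 U KV : 0 < d0 <= 1/4 -> d0 <= d / 2 ->
  (forall t, fst KV t -> inI t) -> absorbs_middle a d U KV -> path_in op U b ->
  in_subbasic KV (a · prev a) ->
  in_subbasic KV (fun s => (a · (b · prev a)) (stretch_middle d0 s)).
Proof.
  intros Hd0 Hdd KI G [_ Ub] Hv t Kt.
  destruct (stretch_middle_cases a b d0 t Hd0 (KI t Kt))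
    as [-> | [Ht [[u [Iu ->]] | [u [Iu [Hu ->]]]]]].
  - auto.
  - apply (G t Kt); [lra | left; auto].
  - apply (G t Kt); [lra | right; exists u; split; [auto | split; [lra | reflexivity]]].
Qed.

Lemma open_semilocally_path_H_connected :
  open_in_pi1_qtop op x0 H -> semilocally_path_H_connected op x0 H.
Proof.
  intros Hop a Ha Ea.
  assert (Haa : H (a · prev a)).
  { apply (H_const_homotopic x0 H HS). apply path_homotopic_sym.
    rewrite <- Ea. apply concat_prev_homotopic_const; auto. }
  destruct (Hop _ Haa) as [l [Lsb [Lin Lall]]].
  destruct (subbasic_list_absorbs_middle a l Ha Lsb Lin) as [d [U [Hd [HU [Ua G]]]]].
  exists U. repeat split; auto.
  intros b Hb Eb0 Eb1.
  pose (d0 := Rmin (d / 2) (1/4)).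
  assert (Hd0 : 0 < d0 <= 1/4) by (split; [apply Rmin_pos; lra | apply Rmin_r]).
  assert (Hdd : d0 <= d / 2) by apply Rmin_l.
  pose (M := a · (b · prev a)).
  assert (PM : is_path op M) by (unfold M; destruct Hb; paths).
  assert (Lip : lipschitz_I (stretch_middle d0)) by (apply lipschitz_I_stretch_middle; lra).
  assert (Maps : maps_I (stretch_middle d0)) by (apply maps_I_stretch_middle; auto).
  assert (E0 : stretch_middle d0 0 = 0) by (unfold stretch_middle; case_Rle; lra).
  assert (E1 : stretch_middle d0 1 = 1) by (unfold stretch_middle; case_Rle; lra).
  assert (HM : H M).
  { apply (H_homotopic x0 H HS (fun s => M (stretch_middle d0 s))).
    - apply Lall.
      + split; [apply is_path_comp; auto|].
        rewrite E0, E1. unfold M; endpoints.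
      + intros KV HKV. destruct (Lsb KV HKV) as [_ [KI _]].
        apply (in_subbasic_stretch_middle a b d d0 U); auto.
    - apply (path_homotopic_reparam M _ _ (stretch_middle d0) (fun s => s));
        auto using lipschitz_I_id.
      intros s Hs; auto. }
  exists M. split; auto. apply path_homotopic_sym. destruct Hb as [Pb _].
  unfold M. via ((b · prev a) · a); [| apply prev_cancel_r; paths].
  apply path_homotopic_concat_l; [| apply prev_cancel_l |]; paths.
Qed.

(* The invariant of the real induction along f in the proof that H is open: a basic
   neighbourhood of f in which, for every loop g, the initial segment g|[0,u] is
   H-equivalent to f|[0,u] followed by any path inside a small path-connected W. *)
Definition tracked_at (f : R -> X) (u : R) : Prop :=
  forall W', op W' -> W' (f u) ->
  exists l W, op W /\ W (f u) /\ (forall x, W x -> W' x) /\ path_connected_set op W /\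
    (forall KV, In KV l -> subbasic op KV) /\ (forall KV, In KV l -> in_subbasic KV f) /\
    forall g, is_loop op x0 g -> (forall KV, In KV l -> in_subbasic KV g) ->
      W (g u) /\ forall c, path_in op W c -> c 0 = f u -> c 1 = g u ->
        Hequiv H (subpath f 0 u · c) (subpath g 0 u).

Lemma tracked_at_0 f : locally_path_connected op -> semilocally_path_H_connected op x0 H ->
  is_path op f -> f 0 = x0 -> tracked_at f 0.
Proof.
  intros LPC Semi Hf Ef W' HW' Hw'.
  destruct (Semi (pconst x0) (is_path_const x0) eq_refl) as [U0 [HU0 [Ux0 HU0b]]].
  unfold pconst in Ux0. rewrite Ef in Hw'.
  destruct (LPC (fun x => U0 x /\ W' x) x0 (op_inter _ _ HU0 HW') (conj Ux0 Hw'))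
    as [W [HW [Wx0 [WS Wpc]]]].
  exists nil, W. rewrite Ef.
  split; [exact HW|]. split; [exact Wx0|]. split; [intros x Hx; apply WS; auto|].
  split; [exact Wpc|]. split; [intros ? []|]. split; [intros ? []|].
  intros g [Pg [Eg0 Eg1]] _. rewrite Eg0. split; auto.
  intros c Hc Ec0 Ec1. destruct Hc as [Pc Wc].
  destruct (HU0b c) as [h [Hh Hch]]; auto.
  { split; auto. intros s Hs. apply WS, Wc; auto. }
  assert (A : Hequiv H (pconst x0 · c) (pconst x0))
    by (apply (Hequiv_conj x0 H HS _ _ h); auto using is_path_const).
  assert (Cf : pconst x0 ≃ subpath f 0 0)
    by (rewrite <- Ef; apply subpath_const_homotopic; auto).
  assert (Cg : pconst x0 ≃ subpath g 0 0)
    by (rewrite <- Eg0; apply subpath_const_homotopic; auto).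
  apply (Hequiv_homotopic_r x0 H HS _ (pconst x0)); [paths.. | exact Cg | ].
  apply (Hequiv_homotopic_l x0 H HS (pconst x0 · c)); [paths.. | | exact A].
  apply path_homotopic_concat_l; [| exact Cf |]; paths.
Qed.

Lemma path_in_window f t e U a b : is_path op f -> inI a -> inI b ->
  t - e < a < t + e -> t - e < b < t + e ->
  (forall u, inI u -> t - e < u < t + e -> U (f u)) -> path_in op U (subpath f a b).
Proof.
  intros Hf Ia Ib Ha Hb HU. apply path_in_subpath; auto.
  intros u Hu. unfold Rmin, Rmax, inI in *; destruct Rle_dec; apply HU; unfold inI; lra.
Qed.

Lemma Hequiv_subpath_step f g t w v U c c' :
  is_path op f -> is_path op g -> f 0 = x0 -> g 0 = x0 -> inI t -> inI w -> inI v ->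
  (forall b, path_in op U b -> b 0 = f t -> b 1 = f t ->
     exists h, H h /\ b ≃ (prev (subpath f 0 t) · h) · subpath f 0 t) ->
  path_in op U (subpath f t w) -> path_in op U (subpath f w v) -> path_in op U (subpath g w v) ->
  path_in op U c -> path_in op U c' ->
  c 0 = f w -> c 1 = g w -> c' 0 = f v -> c' 1 = g v ->
  Hequiv H (subpath f 0 w · c) (subpath g 0 w) ->
  Hequiv H (subpath f 0 v · c') (subpath g 0 v).
Proof.
  intros Hf Hg Ef Eg It Iw Iv Semi Ftw Fwv Gwv C C' Ec0 Ec1 Ec0' Ec1' Sw.
  assert (Pc : is_path op c) by apply C. assert (Pc' : is_path op c') by apply C'.
  destruct (Semi ((subpath f t w · ((subpath f w v · c') · prev (c · subpath g w v)))
                  · prev (subpath f t w))) as [h [Hh Hconj]]; [| paths..].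
  { apply path_in_concat; [apply path_in_concat; [exact Ftw | |] | apply path_in_prev, Ftw |];
      endpoints.
    apply path_in_concat; [apply path_in_concat | apply path_in_prev, path_in_concat |]; auto;
      endpoints. }
  assert (Hfw : subpath f 0 t · subpath f t w ≃ subpath f 0 w)
    by (apply subpath_concat_homotopic; auto).
  apply (Hequiv_homotopic_r x0 H HS (subpath f 0 v · c') (subpath g 0 w · subpath g w v));
    [paths.. | apply subpath_concat_homotopic; auto |].
  apply (Hequiv_homotopic_l x0 H HS (((subpath f 0 t · subpath f t w) · subpath f w v) · c'));
    [paths.. | |].
  - apply path_homotopic_concat_l; [| via (subpath f 0 w · subpath f w v) |]; paths.
    + apply path_homotopic_concat_l; [| exact Hfw |]; paths.
    + apply subpath_concat_homotopic; auto.
  - apply (Hequiv_transport x0 H HS _ _ _ _ c (subpath g w v) _ h); [paths.. | exact Hconj |].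
    apply (Hequiv_homotopic_l x0 H HS (subpath f 0 w · c)); [paths.. | | exact Sw].
    apply path_homotopic_concat_l; [| apply path_homotopic_sym, Hfw |]; paths.
Qed.

Lemma tracked_at_step f t e w v U :
  locally_path_connected op -> is_path op f -> f 0 = x0 -> inI t -> inI w -> inI v ->
  t - e < w -> w <= v -> v < t + e -> op U ->
  (forall u, inI u -> t - e < u < t + e -> U (f u)) ->
  (forall b, path_in op U b -> b 0 = f t -> b 1 = f t ->
     exists h, H h /\ b ≃ (prev (subpath f 0 t) · h) · subpath f 0 t) ->
  tracked_at f w -> tracked_at f v.
Proof.
  intros LPC Hf Ef It Iw Iv Hw Hwv Hv HU Hwin Semi Qw W'' HW'' Hfv.
  destruct (Qw U HU (Hwin w Iw ltac:(lra))) as [l [W [HW [Wfw [WU [Wpc [Lsb [Lf Lg]]]]]]]].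
  destruct (LPC (fun x => U x /\ W'' x) (f v) (op_inter _ _ HU HW'')
              (conj (Hwin v Iv ltac:(lra)) Hfv)) as [Wv [HWv [Wvf [WvS Wvpc]]]].
  exists ((fun s => w <= s <= v, U) :: (fun s => v <= s <= v, Wv) :: l), Wv.
  split; [exact HWv|]. split; [exact Wvf|]. split; [intros x Hx; apply WvS; auto|].
  split; [exact Wvpc|].
  split.
  { intros KV [<- | [<- | Hin]]; auto; simpl;
      (split; [apply compact_P3 | split; [intros s Hs; simpl in Hs | auto]]);
      unfold inI in *; lra. }
  split.
  { intros KV [<- | [<- | Hin]]; auto; intros s Hs; simpl in *.
    - apply Hwin; unfold inI in *; lra.
    - replace s with v by lra. auto. }
  intros g Hg Hsat. destruct Hg as [Pg [Eg0 Eg1]].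
  destruct (Lg g (conj Pg (conj Eg0 Eg1))) as [Wgw Hcl]; [intros; apply Hsat; simpl; auto|].
  assert (gU : forall s, w <= s <= v -> U (g s)).
  { intros s Hs. apply (Hsat (fun s => w <= s <= v, U)); simpl; auto. }
  split; [apply (Hsat (fun s => v <= s <= v, Wv)); simpl; auto; lra|].
  intros c' Hc' Ec0 Ec1.
  destruct (Wpc (f w) (g w) Wfw Wgw) as [c [HcW [Ec0' Ec1']]].
  apply (Hequiv_subpath_step f g t w v U c c'); auto.
  - apply (path_in_window f t e); auto; lra.
  - apply (path_in_window f t e); auto; lra.
  - apply path_in_subpath; auto. intros u Hu. apply gU.
    unfold Rmin, Rmax in Hu; destruct Rle_dec; lra.
  - apply (path_in_mono W); auto.
  - apply (path_in_mono Wv); auto. intros x Hx; apply WvS; auto.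
Qed.

Lemma semilocally_path_H_connected_open : locally_path_connected op ->
  semilocally_path_H_connected op x0 H -> open_in_pi1_qtop op x0 H.
Proof.
  intros LPC Semi f Hf. destruct (proj1 HS f Hf) as [Pf [Ef0 Ef1]].
  assert (Q1 : tracked_at f 1).
  { apply real_induction; [apply tracked_at_0; auto|].
    intros t It.
    destruct (Semi (subpath f 0 t)) as [U [HU [Uft Hb]]]; [paths | endpoints |].
    rewrite subpath_1 in Uft, Hb.
    destruct (Pf U HU t It Uft) as [e [He Hc]].
    exists e. split; auto. intros w v Iw Iv Hw Hwv Hv.
    apply (tracked_at_step f t e w v U); auto.
    intros u Iu Hu. apply Hc; auto. apply Rabs_def1; lra. }
  destruct (Q1 _ op_full I) as [l [W [_ [Wf [_ [_ [Lsb [Lf Lg]]]]]]]].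
  exists l. split; [exact Lsb|]. split; [exact Lf|].
  intros g Hg Hsat. destruct (Lg g Hg Hsat) as [_ Hcl]. destruct Hg as [Pg [Eg0 Eg1]].
  apply (H_of_Hequiv x0 H HS f g); auto; [congruence|].
  apply (Hequiv_homotopic_r x0 H HS _ (subpath g 0 1));
    [paths.. | apply subpath_0_1_homotopic; auto |].
  apply (Hequiv_homotopic_l x0 H HS (subpath f 0 1 · pconst x0)); [paths.. | |].
  - via (subpath f 0 1); [| apply subpath_0_1_homotopic; auto].
    replace (pconst x0) with (pconst (subpath f 0 1 1)) by (rewrite subpath_1, Ef1; reflexivity).
    apply concat_const_homotopic; paths.
  - apply Hcl; [split; [apply is_path_const | intros s _; unfold pconst; congruence] | endpoints..].
Qed.

End Openness.
End Paths.

Theorem proposition4p3 (X : Type) (op : (X -> Prop) -> Prop) (x0 : X)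
  (H : (R -> X) -> Prop) :
  is_topology op ->
  connected op ->
  locally_path_connected op ->
  is_pi1_subgroup op x0 H ->
  (semilocally_path_H_connected op x0 H <-> open_in_pi1_qtop op x0 H).
Proof.
  intros T _ LPC HS. split.
  - apply semilocally_path_H_connected_open; auto.
  - apply open_semilocally_path_H_connected; auto.
Qed.
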